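(* Let $T$ be a balanced tree with a proper 2-coloring $\chi:V\to\{\mathcal{R},\mathcal{B}\}$ in which all leaves are blue, and suppose $\mathrm{height}(T)\ge 4$. Then $T$ has two minimal RD-sets of different sizes, and $T$ is mixed.
   Context: $N(D)=\bigcup_{v\in D}\{u:uv\in E\}$. A leaf is a vertex of degree 1; the height of a vertex is its minimum distance to a leaf; $\mathrm{height}(T)$ is the maximum height of a vertex; $T$ is balanced if no two adjacent vertices have the same height. A proper 2-coloring gives adjacent vertices different colors. An RD-set (red-dominating set) is $D\subseteq V$ with $N(D)=\chi^{-1}(\mathcal{R})$; it is minimal if no proper subset is an RD-set. A TD-set is $D$ with $N(D)=V$, minimal if no proper subset is a TD-set; $T$ is mixed if not all minimal TD-sets have the same size. *)

From mathcomp Require Import all_boot.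
Set Implicit Arguments. Unset Strict Implicit. Unset Printing Implicit Defensive.

(* A simple graph: vertex set a finType T, adjacency e : rel T,
   assumed symmetric and irreflexive in the theorem. *)

Section Graphs.
Variables (T : finType) (e : rel T).

Definition nbhd (D : {set T}) : {set T} :=
  [set u | [exists v in D, e u v]].

Definition degree (v : T) : nat := #|[set u | e v u]|.

Definition leaf (v : T) : bool := degree v == 1.

Definition connected : Prop := forall x y : T, connect e x y.

Definition acyclic : Prop :=
  forall c : seq T, uniq c -> 2 < size c -> ~~ cycle e c.

Definition is_tree : Prop := connected /\ acyclic.

Definition is_height (v : T) (k : nat) : Prop :=
  (exists p : seq T, [/\ path e v p, leaf (last v p) & size p = k]) /\
  (forall p : seq T, path e v p -> leaf (last v p) -> k <= size p).

Definition tree_height_ge (n : nat) : Prop :=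
  exists v k, is_height v k /\ n <= k.

Definition balanced : Prop :=
  forall u v k, e u v -> is_height u k -> ~ is_height v k.

(* 2-colorings are chi : T -> bool with  true = red (R), false = blue (B) *)
Definition proper_2coloring (chi : T -> bool) : Prop :=
  forall u v, e u v -> chi u != chi v.

Definition red_set (chi : T -> bool) : {set T} := [set v | chi v].

Definition RD_set (chi : T -> bool) (D : {set T}) : Prop :=
  nbhd D = red_set chi.

Definition minimal_RD_set (chi : T -> bool) (D : {set T}) : Prop :=
  RD_set chi D /\ forall D' : {set T}, D' \proper D -> ~ RD_set chi D'.

Definition TD_set (D : {set T}) : Prop := nbhd D = [set: T].

Definition minimal_TD_set (D : {set T}) : Prop :=
  TD_set D /\ forall D' : {set T}, D' \proper D -> ~ TD_set D'.

Definition mixed : Prop :=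
  exists D1 D2, [/\ minimal_TD_set D1, minimal_TD_set D2 & #|D1| != #|D2|].

End Graphs.

From mathcomp Require Import all_boot.
From Stdlib Require Import Classical.
Set Implicit Arguments. Unset Strict Implicit. Unset Printing Implicit Defensive.

(* Take a vertex x4 of height 4 and a shortest path x4 x3 x2 x1 x0 to a leaf, and root the
   tree at x3. The blue vertices other than the neighbours of x1 and x3 besides x0 and x4, and
   other than the depth-5 vertices not below x1, form an RD-set pruned_blue. A minimal RD-set
   M inside it must contain x0 and x4, the only vertices of pruned_blue next to x1 and x3, and
   every other red neighbour r of x4 is dominated within M by a child of r. Hence trading x0
   and x4 for x2 turns M into a smaller RD-set, which contains a minimal RD-set smaller than M.
   For mixedness, the union of a minimal RD-set with a fixed minimal set of red vertices
   dominating the blue ones is a minimal TD-set, and the sizes add up. *)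

Section Distance.
Variables (T : finType) (e : rel T) (A : {set T}).

Fixpoint reach_in (n : nat) : {set T} :=
  if n is n'.+1 then [set v | [exists u in reach_in n', e v u]] else A.

Lemma reach_inP n v :
  reflect (exists p, [/\ path e v p, last v p \in A & size p = n]) (v \in reach_in n).
Proof.
elim: n v => [|n IH] v /=.
  apply: (iffP idP) => [vA|[p [_ lA sz]]]; first by exists [::].
  by case: p sz lA => [|//] _.
rewrite inE; apply: (iffP existsP) => [[u /andP[/IH [p [pp lp sp]] evu]]|[[|u p] [pp lp sp]]] //.
  by exists (u :: p); rewrite /= evu pp lp sp.
move: pp => /= /andP[evu pp]; exists u; rewrite evu andbT; apply/IH.
by exists p; split => //; case: sp.
Qed.

Lemma connected_reachable a : (forall x y, connect e x y) -> a \in A ->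
  forall v, exists n, v \in reach_in n.
Proof.
move=> conn aA v; have /connectP [p pp lp] := conn v a.
by exists (size p); apply/reach_inP; exists p; rewrite -lp.
Qed.

Hypothesis reachable : forall v, exists n, v \in reach_in n.

Definition dist (v : T) : nat := ex_minn (reachable v).

Lemma dist_reach_in v : v \in reach_in (dist v).
Proof. by rewrite /dist; case: ex_minnP. Qed.

Lemma dist_min v n : v \in reach_in n -> dist v <= n.
Proof. by rewrite /dist; case: ex_minnP => m _ le_m /le_m. Qed.

Lemma dist_le_walk v p : path e v p -> last v p \in A -> dist v <= size p.
Proof. by move=> pp lp; apply: dist_min; apply/reach_inP; exists p. Qed.

Lemma shortest_walk v : exists p, [/\ path e v p, last v p \in A & size p = dist v].
Proof. exact/reach_inP/dist_reach_in. Qed.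

Lemma dist_eq0 v : (dist v == 0) = (v \in A).
Proof.
apply/idP/idP => [/eqP dv|vA]; first by have := dist_reach_in v; rewrite dv.
by rewrite -leqn0; apply: dist_min.
Qed.

Lemma dist_adj u v : e u v -> dist u <= (dist v).+1.
Proof.
by move=> euv; apply: dist_min; rewrite /= inE; apply/existsP; exists v; rewrite dist_reach_in.
Qed.

Lemma dist_step v n : dist v = n.+1 -> exists2 w, e v w & dist w = n.
Proof.
move=> dv; have := dist_reach_in v; rewrite dv /= inE => /existsP [w /andP [wn evw]].
exists w => //; apply/eqP; rewrite eqn_leq dist_min //= -ltnS -dv.
exact: dist_adj.
Qed.

Lemma dist_attained v n : n <= dist v -> exists w, dist w = n.
Proof.
move/subnK; move: (dist v - n) => m; elim: m v => [|m IH] v dv; first by exists v.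
by rewrite addSn in dv; have [w _ /esym/IH] := dist_step (esym dv).
Qed.

Lemma dist_le_walk_mem v p w : path e v p -> last v p \in A -> w \in v :: p ->
  dist w <= size p.
Proof.
elim: p v => [|y p IH] v /=.
  by move=> _ vA; rewrite inE => /eqP ->; rewrite leqn0 dist_eq0.
move=> /andP [evy pp] lp; rewrite inE => /orP [/eqP ->|wp].
  by apply: (@dist_le_walk v (y :: p)) => //=; rewrite evy.
exact: leqW (IH y pp lp wp).
Qed.

End Distance.

Section Leaves.
Variables (T : finType) (e : rel T).

Lemma leaf_neighbour_uniq v a b : leaf e v -> e v a -> e v b -> a = b.
Proof.
rewrite /leaf /degree => /cards1P [z Nv] eva evb.
have : a \in [set u | e v u] by rewrite inE.
have : b \in [set u | e v u] by rewrite inE.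
by rewrite Nv !inE => /eqP -> /eqP ->.
Qed.

Lemma nonleaf_other_neighbour v a : ~~ leaf e v -> e v a -> exists2 b, e v b & b != a.
Proof.
move=> nl eva; have aN : a \in [set u | e v u] by rewrite inE.
have : 0 < #|[set u | e v u] :\ a|.
  by move: nl; rewrite /leaf /degree (cardsD1 a) aN add1n eqSS lt0n.
by rewrite card_gt0 => /set0Pn [b]; rewrite !inE => /andP [ba evb]; exists b.
Qed.

Lemma is_height_dist (reach : forall v, exists n, v \in reach_in e [set u | leaf e u] n)
  v k : is_height e v k -> dist reach v = k.
Proof.
move=> [[p [pv lp <-]] k_min]; apply/eqP; rewrite eqn_leq dist_le_walk ?inE //=.
by have [q [qv lq <-]] := shortest_walk reach v; apply: k_min; rewrite inE in lq.
Qed.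

Lemma connected_no_isolated a b : (forall x y, connect e x y) -> e a b ->
  forall v, exists u, e v u.
Proof.
move=> conn eab v; have /connectP [[|u p] /= + lp] := conn v a; last by case/andP; exists u.
by rewrite -lp; exists b.
Qed.

End Leaves.

Section Coloring.
Variables (T : finType) (e : rel T) (chi : T -> bool).
Hypothesis chi_proper : proper_2coloring e chi.

Lemma proper_2coloring_adj u v : e u v -> chi v = ~~ chi u.
Proof. by move=> /chi_proper; case: (chi u); case: (chi v). Qed.

Lemma proper_2coloringN : proper_2coloring e (fun v => ~~ chi v).
Proof. by move=> u v /chi_proper; case: (chi u); case: (chi v). Qed.

Lemma proper_2coloring_path x p : path e x p -> chi (last x p) = chi x (+) odd (size p).
Proof.
elim: p x => [|y p IH] x /=; first by rewrite addbF.
move=> /andP [exy pp]; rewrite IH // (proper_2coloring_adj exy).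
by case: (chi x); case: (odd _).
Qed.

End Coloring.

Lemma exists_minimal_subset (T : finType) (P : {set T} -> Prop) (S : {set T}) :
  P S -> exists M : {set T},
    [/\ M \subset S, P M & forall M' : {set T}, M' \proper M -> ~ P M'].
Proof.
move: {2}#|S| (leqnn #|S|) => n; elim: n S => [|n IH] S.
  rewrite leqn0 => /eqP S0 PS; exists S; split => // M' /proper_card; by rewrite S0.
move=> Sn PS.
case: (classic (exists2 M' : {set T}, M' \proper S & P M')) => [[M' MS PM']|no_smaller].
  have [|M [MM' PM Mmin]] := IH M' _ PM'.
    by rewrite -ltnS; apply: leq_trans Sn; apply: proper_card.
  by exists M; split => //; apply: subset_trans MM' (proper_sub MS).
by exists S; split => // M' MS PM'; apply: no_smaller; exists M'.
Qed.

Section Rooted.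
Variables (T : finType) (e : rel T) (rho : T).
Hypothesis conn : forall x y : T, connect e x y.

Let rho_reachable := connected_reachable conn (set11 rho).

Definition depth : T -> nat := dist rho_reachable.

Lemma depth_eq0 v : (depth v == 0) = (v == rho).
Proof. by rewrite /depth dist_eq0 inE. Qed.

Hypothesis e_sym : symmetric e.

Lemma walk_below a b : exists p, [/\ path e a p, last a p = b &
  {in a :: p, forall w, depth w <= maxn (depth a) (depth b)}].
Proof.
have [pa [ppa /set1P lpa spa]] := shortest_walk rho_reachable a.
have [pb [ppb /set1P lpb spb]] := shortest_walk rho_reachable b.
exists (pa ++ rev (belast b pb)); split.
- rewrite cat_path ppa lpa -lpb rev_path.
  by apply: sub_path ppb => x y; rewrite /= e_sym.
- rewrite last_cat lpa -lpb; case: pb {ppb spb lpb} => [|y pb] //=.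
  by rewrite rev_cons last_rcons.
move=> w; rewrite /depth -cat_cons mem_cat leq_max => /orP [wa|].
  by rewrite -spa (dist_le_walk_mem _ ppa) // lpa set11.
rewrite mem_rev => /mem_belast wb.
by rewrite -spb (dist_le_walk_mem _ ppb) ?orbT // lpb set11.
Qed.

Variable chi : T -> bool.
Hypothesis chi_proper : proper_2coloring e chi.

Lemma chi_depth v : chi v = chi rho (+) odd (depth v).
Proof.
have [p [pp /set1P lp sp]] := shortest_walk rho_reachable v.
have := proper_2coloring_path chi_proper pp; rewrite lp sp => ->.
by rewrite -addbA addbb addbF.
Qed.

Lemma depth_adj u v : e u v -> depth u = (depth v).+1 \/ depth v = (depth u).+1.
Proof.
move=> euv; have le_uv := dist_adj rho_reachable euv.
have le_vu : depth v <= (depth u).+1.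
  by apply: dist_adj; rewrite e_sym.
have := chi_proper euv; rewrite (chi_depth u) (chi_depth v).
case: (ltngtP (depth u) (depth v)) => [lt_uv|lt_vu|->]; last by rewrite eqxx.
- by right; apply/eqP; rewrite eqn_leq le_vu lt_uv.
- by left; apply/eqP; rewrite eqn_leq le_uv lt_vu.
Qed.

Hypothesis acyc : forall c : seq T, uniq c -> 2 < size c -> ~~ cycle e c.

(* Two lower neighbours a, b of v are joined by a walk below v; shortened, it closes a cycle
   through v. *)
Lemma lower_neighbour_uniq v a b : e v a -> e v b ->
  (depth a).+1 = depth v -> (depth b).+1 = depth v -> a = b.
Proof.
move=> eva evb da db; apply/eqP/negPn/negP => nab.
have [p [pp + below]] := walk_below a b.
case: (shortenP pp) => p' pp' up' sub' lp'.
have v_notin : v \notin a :: p'.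
  apply/negP => /predU1P [va|/sub' vp]; first by move/eqP: da; rewrite -va eqn_leq ltnn.
  have := below v; rewrite inE vp orbT => /(_ isT).
  by rewrite leq_max -{1}da -db !ltnn.
have size_c : 2 < size [:: v, a & p'].
  by case: p' lp' {pp' up' sub' v_notin} => [/= ab|]; first by rewrite ab eqxx in nab.
have uniq_c : uniq [:: v, a & p'] by rewrite cons_uniq v_notin up'.
apply/negP: (acyc uniq_c size_c).
by rewrite /= rcons_path eva pp' lp' e_sym evb.
Qed.

Definition parent (v : T) : T :=
  odflt v [pick w | e v w && ((depth w).+1 == depth v)].

Lemma parent_spec v : 0 < depth v -> e v (parent v) /\ (depth (parent v)).+1 = depth v.
Proof.
move=> /prednK dv; have [w evw] := dist_step (esym dv); rewrite -/(depth w) => dw.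
rewrite /parent; case: pickP => [u /andP [evu /eqP du] | /(_ w)] //=.
by rewrite evw dw dv eqxx.
Qed.

Lemma parent_eq v w : e v w -> (depth w).+1 = depth v -> parent v = w.
Proof.
move=> evw dw; have [|evp dp] := @parent_spec v; first by rewrite -dw.
exact: lower_neighbour_uniq evp evw dp dw.
Qed.

Lemma parent_of_child u v : e u v -> depth v = (depth u).+1 -> parent v = u.
Proof. by move=> euv dv; apply: parent_eq; rewrite 1?e_sym ?dv. Qed.

Lemma exists_child v : 0 < depth v -> ~~ leaf e v ->
  exists w, [/\ e v w, depth w = (depth v).+1 & parent w = v].
Proof.
move=> dv nl; have [evp dp] := parent_spec dv.
have [w evw wp] := nonleaf_other_neighbour nl evp.
have [dw|dw] := depth_adj evw; last by exists w; rewrite (parent_of_child evw).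
by rewrite (parent_eq evw (esym dw)) eqxx in wp.
Qed.

End Rooted.

Section Dominating.
Variables (T : finType) (e : rel T).
Hypotheses (e_sym : symmetric e) (no_isolated : forall v, exists u, e v u).

Lemma in_nbhd (D : {set T}) u : (u \in nbhd e D) = [exists v in D, e u v].
Proof. by rewrite inE. Qed.

Lemma nbhdU (A B : {set T}) : nbhd e (A :|: B) = nbhd e A :|: nbhd e B.
Proof.
apply/setP => u; rewrite in_setU !in_nbhd; apply/existsP/orP.
  by move=> [v /andP [/setUP [vA|vB] euv]]; [left|right]; apply/existsP; exists v; apply/andP.
by move=> [|] /existsP [v /andP [vX euv]]; exists v; rewrite inE vX ?orbT.
Qed.

Lemma RD_set_dominates chi (D : {set T}) t :
  RD_set e chi D -> chi t -> exists2 v, v \in D & e t v.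
Proof.
move=> DRD ct; have : t \in nbhd e D by rewrite DRD inE.
by rewrite in_nbhd => /existsP [v /andP [vD etv]]; exists v.
Qed.

Section Coloured.
Variable chi : T -> bool.
Hypothesis chi_proper : proper_2coloring e chi.
Let chi_adj := proper_2coloring_adj chi_proper.

Lemma RD_set_intro (D : {set T}) : D \subset [set v | ~~ chi v] ->
  (forall t, chi t -> exists2 v, v \in D & e t v) -> RD_set e chi D.
Proof.
move=> Dblue dom; apply/setP => u; rewrite in_nbhd inE; apply/existsP/idP.
  move=> [v /andP [vD euv]]; have := subsetP Dblue v vD.
  by rewrite inE (chi_adj euv) negbK.
by move=> cu; have [v vD euv] := dom u cu; exists v; rewrite vD.
Qed.

Lemma TD_set_blue_RD (D : {set T}) :
  TD_set e D -> RD_set e chi (D :&: [set v | ~~ chi v]).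
Proof.
move=> DTD; apply: RD_set_intro; first exact: subsetIr.
move=> t ct; have : t \in nbhd e D by rewrite DTD inE.
rewrite in_nbhd => /existsP [v /andP [vD etv]].
by exists v; rewrite // !inE vD (chi_adj etv) ct.
Qed.

Lemma RD_set_sub_blue (D : {set T}) : RD_set e chi D -> D \subset [set v | ~~ chi v].
Proof.
move=> DRD; apply/subsetP => v vD; have [u evu] := no_isolated v.
have : u \in nbhd e D by rewrite in_nbhd; apply/existsP; exists v; rewrite vD e_sym.
by rewrite DRD !inE (chi_adj evu).
Qed.

Lemma blue_RD_set : RD_set e chi [set v | ~~ chi v].
Proof.
rewrite -[X in RD_set _ _ X]setTI; apply: TD_set_blue_RD.
apply/setP => u; rewrite in_nbhd inE; have [v euv] := no_isolated u.
by apply/existsP; exists v; rewrite inE.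
Qed.

End Coloured.

Lemma minimal_RD_set_eq chi (D D' : {set T}) : minimal_RD_set e chi D ->
  D' \subset D -> RD_set e chi D' -> D' = D.
Proof.
move=> [_ Dmin] sD' D'RD; apply/eqP; apply: contraT => neD'.
by case: (Dmin D'); rewrite // properEneq neD'.
Qed.

Lemma TD_set_sub chi (D X D' : {set T}) :
  proper_2coloring e chi -> minimal_RD_set e chi D ->
  X \subset [set v | chi v] -> D' \subset D :|: X -> TD_set e D' -> D \subset D'.
Proof.
move=> chi_proper minD Xred sD' D'TD.
suff <- : D' :&: [set v | ~~ chi v] = D by apply: subsetIl.
apply: minimal_RD_set_eq minD _ (TD_set_blue_RD chi_proper D'TD).
apply/subsetP => v /setIP [/(subsetP sD') /setUP [//|vX]].
by have := subsetP Xred v vX; rewrite !inE => ->.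
Qed.

Lemma minimal_TD_setU chi (D B : {set T}) : proper_2coloring e chi ->
  minimal_RD_set e chi D -> minimal_RD_set e (fun v => ~~ chi v) B ->
  minimal_TD_set e (D :|: B) /\ #|D :|: B| = #|D| + #|B|.
Proof.
move=> chi_proper minD minB.
have chiN_proper := proper_2coloringN chi_proper.
have Dblue := RD_set_sub_blue chi_proper minD.1.
have Bred : B \subset [set v | chi v].
  apply: subset_trans (RD_set_sub_blue chiN_proper minB.1) _.
  by apply/subsetP => v; rewrite !inE negbK.
split; last first.
  apply/eqP; rewrite (leq_card_setU D B) disjoint_subset.
  apply/subsetP => v /(subsetP Dblue); rewrite !inE => /negbTE cv.
  by apply/negP => /(subsetP Bred); rewrite inE cv.
split=> [|D' ltD' D'TD].
  by apply/setP => v; rewrite nbhdU minD.1 minB.1 !inE orbN.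
have sD' := proper_sub ltD'.
have sDD' := TD_set_sub chi_proper minD Bred sD' D'TD.
have sBD' : B \subset D'.
  by apply: TD_set_sub chiN_proper minB Dblue _ D'TD; rewrite setUC.
by move: ltD'; rewrite properE subUset sDD' sBD' andbF.
Qed.

Lemma mixed_of_RD_sizes chi (D1 D2 : {set T}) : proper_2coloring e chi ->
  minimal_RD_set e chi D1 -> minimal_RD_set e chi D2 -> #|D1| != #|D2| -> mixed e.
Proof.
move=> chi_proper min1 min2 ne12.
have [B [_ BRD Bmin]] :=
  exists_minimal_subset (blue_RD_set (proper_2coloringN chi_proper)).
have [TD1 card1] := minimal_TD_setU chi_proper min1 (conj BRD Bmin).
have [TD2 card2] := minimal_TD_setU chi_proper min2 (conj BRD Bmin).
by exists (D1 :|: B), (D2 :|: B); rewrite card1 card2 eqn_add2r.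
Qed.

End Dominating.

Section Construction.
Variables (T : finType) (e : rel T).
Hypotheses (e_sym : symmetric e) (conn : forall x y : T, connect e x y)
  (acyc : forall c : seq T, uniq c -> 2 < size c -> ~~ cycle e c).
Variable chi : T -> bool.
Hypotheses (chi_proper : proper_2coloring e chi)
  (leaf_blue : forall v, leaf e v -> chi v = false).
Hypothesis leaves_reachable : forall v, exists n, v \in reach_in e [set u | leaf e u] n.
Local Notation height := (dist leaves_reachable).
Variables x0 x1 x2 x3 x4 : T.
Hypotheses (e10 : e x1 x0) (e21 : e x2 x1) (e32 : e x3 x2) (e43 : e x4 x3).
Hypotheses (h0 : height x0 = 0) (h1 : height x1 = 1) (h2 : height x2 = 2)
  (h3 : height x3 = 3) (h4 : height x4 = 4).

Local Notation dp := (depth x3 conn).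
Local Notation par := (parent x3 conn).
Let dp_adj := depth_adj x3 conn e_sym chi_proper.
Let par_eq := @parent_eq T e x3 conn e_sym acyc.
Let par_child := @parent_of_child T e x3 conn e_sym acyc.
Let child := @exists_child T e x3 conn e_sym chi chi_proper acyc.
Let chi_adj := proper_2coloring_adj chi_proper.
Let neq_height a b : height a != height b -> a != b :=
  contra_neq (congr1 height (x := a) (y := b)).

Lemma leaf_x0 : leaf e x0.
Proof. by have := dist_eq0 leaves_reachable x0; rewrite h0 inE. Qed.

Lemma no_leaf_near_x4 r y : e x4 r -> e r y -> ~~ leaf e y.
Proof.
move=> e4r ery; apply/negP => ly.
have hy : height y = 0 by apply/eqP; rewrite dist_eq0 inE.
have := dist_adj leaves_reachable e4r; have := dist_adj leaves_reachable ery.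
by rewrite h4 hy ltnS => hr /leq_trans /(_ hr).
Qed.

Lemma red_nonleaf v : chi v -> ~~ leaf e v.
Proof. by move=> cv; apply/negP => /leaf_blue; rewrite cv. Qed.

Lemma chi_x0 : chi x0 = false. Proof. exact: leaf_blue leaf_x0. Qed.
Lemma chi_x1 : chi x1. Proof. by apply/negbFE; rewrite -(chi_adj e10) chi_x0. Qed.
Lemma chi_x2 : chi x2 = false. Proof. by apply/negbTE; rewrite -(chi_adj e21) chi_x1. Qed.
Lemma chi_x3 : chi x3. Proof. by apply/negbFE; rewrite -(chi_adj e32) chi_x2. Qed.
Lemma chi_x4 : chi x4 = false. Proof. by apply/negbTE; rewrite -(chi_adj e43) chi_x3. Qed.

Lemma dp_x3 : dp x3 = 0. Proof. by apply/eqP; rewrite depth_eq0. Qed.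
Lemma dp_x2 : dp x2 = 1. Proof. by case: (dp_adj e32); rewrite dp_x3. Qed.
Lemma dp_x4 : dp x4 = 1. Proof. by case: (dp_adj e43); rewrite dp_x3. Qed.

Lemma dp_x1 : dp x1 = 2.
Proof.
case: (dp_adj e21); rewrite dp_x2 // => -[] /esym /eqP; rewrite depth_eq0.
by rewrite (negbTE (neq_height _)) // h1 h3.
Qed.

Lemma par_x1 : par x1 = x2. Proof. by apply: par_child; rewrite // dp_x1 dp_x2. Qed.

Lemma dp_x0 : dp x0 = 3.
Proof.
case: (dp_adj e10); rewrite dp_x1 // => dx0.
have : par x1 = x0 by apply: par_eq; rewrite // dp_x1 dx0.
by rewrite par_x1 => /eqP; rewrite (negbTE (neq_height _)) // h0 h2.
Qed.

Lemma par_x0 : par x0 = x1. Proof. by apply: par_eq; rewrite 1?e_sym ?dp_x0 ?dp_x1. Qed.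

Definition pruned_blue : {set T} :=
  [set v | [&& ~~ chi v, e v x1 ==> (v == x0), e v x3 ==> (v == x4)
             & (dp v == 5) ==> (par (par (par v)) == x1)]].

Lemma not_e_x4_x1 : ~~ e x4 x1.
Proof.
apply/negP => e41; have : par x1 = x4 by apply: par_child; rewrite // dp_x1 dp_x4.
by rewrite par_x1 => /eqP; rewrite (negbTE (neq_height _)) // h2 h4.
Qed.

Lemma pruned_blue_dominates t : chi t -> exists2 v, v \in pruned_blue & e t v.
Proof.
move=> ct; have [->|t3] := eqVneq t x3.
  by exists x4; rewrite 1?e_sym // inE chi_x4 (negbTE not_e_x4_x1) eqxx implybT dp_x4.
have [->|t1] := eqVneq t x1.
  exists x0 => //; rewrite inE chi_x0 eqxx implybT dp_x0 /= andbT.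
  by apply/implyP => /dp_adj; rewrite dp_x0 dp_x3; case.
have dt : 0 < dp t by rewrite lt0n depth_eq0.
have [/andP [/eqP dt4 ppt]|no_grandparent] := boolP ((dp t == 4) && (par (par t) != x1)).
  have [ep dpp] := parent_spec dt.
  have dp3 : dp (par t) = 3 by move: dpp; rewrite dt4 => -[].
  exists (par t) => //; rewrite inE (chi_adj ep) ct dp3 /= andbT.
  apply/andP; split; apply/implyP => e_pt; have := dp_adj e_pt.
    by rewrite dp3 dp_x1 => -[] // _; rewrite (par_eq e_pt) ?dp3 ?dp_x1 ?eqxx in ppt.
  by rewrite dp3 dp_x3; case.
have [s [ets ds ps]] := child dt (red_nonleaf ct).
exists s => //; rewrite inE (chi_adj ets) ct /=.
apply/and3P; split; apply/implyP => e_s.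
- have [ds1|] := dp_adj e_s; first by move: t1; rewrite -ps (par_eq e_s) ?eqxx // ds1.
  by rewrite ds dp_x1 => -[] dt0; rewrite -dt0 in dt.
- by have := dp_adj e_s; rewrite ds dp_x3 => -[] // [] dt0; rewrite dt0 in dt.
- by move: e_s no_grandparent; rewrite ds ps eqSS => /eqP -> /=; rewrite negbK.
Qed.

Lemma pruned_blue_sub : pruned_blue \subset [set v | ~~ chi v].
Proof. by apply/subsetP => v; rewrite !inE => /andP []. Qed.

Lemma pruned_blue_RD : RD_set e chi pruned_blue.
Proof. exact: (RD_set_intro chi_proper pruned_blue_sub pruned_blue_dominates). Qed.

Section PrunedSubset.
Variable M : {set T}.
Hypotheses (M_pruned : M \subset pruned_blue) (M_RD : RD_set e chi M).

Lemma x0_in_M : x0 \in M.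
Proof.
have [m mM e1m] := RD_set_dominates M_RD chi_x1.
have := subsetP M_pruned m mM; rewrite inE (e_sym m x1) e1m /=.
by case/and4P => _ /eqP <-.
Qed.

Lemma x4_in_M : x4 \in M.
Proof.
have [m mM e3m] := RD_set_dominates M_RD chi_x3.
have := subsetP M_pruned m mM; rewrite inE (e_sym m x3) e3m /=.
by case/and4P => _ _ /eqP <-.
Qed.

(* r has a red grandchild q, as no leaf lies within distance 2 of x4; q can only be dominated
   by its parent, since the depth-5 vertices of pruned_blue lie below x1, not below r. *)
Lemma x4_branch_dominated r : e x4 r -> r != x3 ->
  exists2 y, y \in M & [/\ e r y, y != x0 & y != x4].
Proof.
move=> e4r r3.
have dr : dp r = 2.
  by case: (dp_adj e4r); rewrite dp_x4 // => -[] /esym /eqP; rewrite depth_eq0 (negbTE r3).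
have pr : par r = x4 by apply: par_child; rewrite // dr dp_x4.
have cr : chi r by rewrite (chi_adj e4r) chi_x4.
have r1 : r != x1.
  apply/eqP => rx1; move: pr; rewrite rx1 par_x1 => /eqP.
  by rewrite (negbTE (neq_height _)) // h2 h4.
have [y [ery dy py]] : exists y, [/\ e r y, dp y = (dp r).+1 & par y = r].
  by apply: child (red_nonleaf cr); rewrite dr.
have [q [eyq dq pq]] : exists q, [/\ e y q, dp q = (dp y).+1 & par q = y].
  by apply: child (no_leaf_near_x4 e4r ery); rewrite dy.
have cq : chi q by rewrite (chi_adj eyq) (chi_adj ery) cr.
have [m mM eqm] := RD_set_dominates M_RD cq.
have my : m = y.
  have [dq_m|dm] := dp_adj eqm; first by rewrite -(par_eq eqm (esym dq_m)) pq.
  have := subsetP M_pruned m mM; rewrite inE => /and4P [_ _ _].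
  by rewrite dm dq dy dr /= (par_child eqm dm) pq py (negbTE r1).
rewrite my in mM; exists y => //; split => //.
  by apply/eqP => yx0; move: py; rewrite yx0 par_x0 => rx1; rewrite rx1 eqxx in r1.
by apply/eqP => yx4; move: dy; rewrite yx4 dp_x4 dr.
Qed.

Definition swapped : {set T} := x2 |: (M :\ x0 :\ x4).

Lemma swapped_card : #|swapped| < #|M|.
Proof.
have x2M : x2 \notin M.
  apply/negP => /(subsetP M_pruned); rewrite inE e21 /=.
  by rewrite (negbTE (neq_height _)) ?andbF // h2 h0.
have x40 : x4 != x0 by apply: neq_height; rewrite h4 h0.
rewrite cardsU1 !inE (negbTE x2M) !andbF /=.
by rewrite (cardsD1 x0 M) x0_in_M (cardsD1 x4 (M :\ x0)) !inE x4_in_M x40.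
Qed.

(* x2 takes over x1 and x3; x0, a leaf, dominated only x1, and the other red neighbours of x4
   are covered by x4_branch_dominated. *)
Lemma swapped_RD : RD_set e chi swapped.
Proof.
apply: (RD_set_intro chi_proper).
  apply/subsetP => v; rewrite !inE => /predU1P [->|/and3P [_ _ vM]].
    by rewrite chi_x2.
  by have := subsetP pruned_blue_sub v (subsetP M_pruned v vM); rewrite inE.
move=> t ct; have [->|t1] := eqVneq t x1; first by exists x2; rewrite ?setU11 1?e_sym.
have [->|t3] := eqVneq t x3; first by exists x2; rewrite ?setU11.
have [m mM etm] := RD_set_dominates M_RD ct.
have [m0|m_x0] := eqVneq m x0.
  have e0t : e x0 t by rewrite e_sym -m0.
  have e01 : e x0 x1 by rewrite e_sym.
  by rewrite (leaf_neighbour_uniq leaf_x0 e0t e01) eqxx in t1.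
have [m4|m_x4] := eqVneq m x4.
  have e4t : e x4 t by rewrite e_sym -m4.
  have [y yM [ety y0 y4]] := x4_branch_dominated e4t t3.
  by exists y; rewrite // !inE y0 y4 yM orbT.
by exists m; rewrite // !inE m_x0 m_x4 mM orbT.
Qed.

End PrunedSubset.

Lemma minimal_RD_sets_of_different_sizes : exists D1 D2 : {set T},
  [/\ minimal_RD_set e chi D1, minimal_RD_set e chi D2 & #|D1| != #|D2|].
Proof.
have [M [M_pruned M_RD M_min]] := exists_minimal_subset pruned_blue_RD.
have [N [N_sub N_RD N_min]] := exists_minimal_subset (swapped_RD M_pruned M_RD).
exists M, N; split => //; rewrite neq_ltn orbC.
by rewrite (leq_ltn_trans (subset_leq_card N_sub)) ?swapped_card.
Qed.

End Construction.

Theorem theorem3p32 (T : finType) (e : rel T)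
    (e_sym : symmetric e) (e_irr : irreflexive e) (Htree : is_tree e)
    (Hbal : balanced e)
    (chi : T -> bool) (Hproper : proper_2coloring e chi)
    (Hleaves : forall v, leaf e v -> chi v = false)
    (Hheight : tree_height_ge e 4) :
  (exists D1 D2 : {set T},
      [/\ minimal_RD_set e chi D1, minimal_RD_set e chi D2 & #|D1| != #|D2|])
  /\ mixed e.
Proof.
have [conn acyc] := Htree.
have [v [k [v_height k4]]] := Hheight.
have [[p [_ leaf_end _]] _] := v_height.
have leaves_reachable : forall w, exists n, w \in reach_in e [set u | leaf e u] n.
  by apply: (connected_reachable conn (a := last v p)); rewrite inE.
have [x4 h4] : exists x4, dist leaves_reachable x4 = 4.
  by apply: (dist_attained (v := v)); rewrite (is_height_dist _ v_height).
have [x3 e43 h3] := dist_step h4.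
have [x2 e32 h2] := dist_step h3.
have [x1 e21 h1] := dist_step h2.
have [x0 e10 h0] := dist_step h1.
have [D1 [D2 [min1 min2 ne12]]] := minimal_RD_sets_of_different_sizes e_sym conn acyc
  Hproper Hleaves e10 e21 e32 e43 h0 h1 h2 h3 h4.
split; first by exists D1, D2.
exact: (mixed_of_RD_sizes e_sym (connected_no_isolated conn e10) Hproper min1 min2 ne12).
Qed.
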